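(* Let $p:\tilde\Gamma\to\Gamma$ be a regular cover, let $\Lambda$ be a finite induced subgraph of $\tilde\Gamma$, and let $\phi=p|_\Lambda:\Lambda\to\Gamma$; suppose that $\phi$ is surjective on vertex sets. Let $F$ be a finite nonempty subset of $V(\tilde\Gamma)$, let $\Sigma$ be the set of all deck transformations $\sigma:\tilde\Gamma\to\tilde\Gamma$ with $\sigma(\Lambda)\cap F\ne\emptyset$, and let $\Lambda_1$ be the induced subgraph of $\tilde\Gamma$ on $\bigcup_{\sigma\in\Sigma}\sigma(V(\Lambda))$. If $\phi^*:G(\Gamma)\to G(\Lambda)$ is injective, then $\phi_1=p|_{\Lambda_1}:\Lambda_1\to\Gamma$ is $F$-surviving.
   Context: All graphs are undirected and simplicial; $\Gamma$ is finite, $\tilde\Gamma$ may be infinite. A map of graphs sends vertices to vertices and adjacent vertices to adjacent vertices. A covering $p:\tilde\Gamma\to\Gamma$ is a surjective map of graphs restricting to a bijection from the neighbours of each $v'$ to the neighbours of $p(v')$; a deck transformation is a graph automorphism $\sigma$ of $\tilde\Gamma$ with $p\circ\sigma=p$; the cover is regular if the deck group acts transitively on each fiber. ${\operatorname{Lk}}_\Gamma(v)$ is the set of neighbours of $v$. $G(\Gamma)$ is the group generated by $V(\Gamma)$ with relations $[u,v]=1$ whenever $\{u,v\}$ is NOT an edge. A map of graphs $\phi:\Lambda\to\Gamma$ induces $\phi^*:G(\Gamma)\to G(\Lambda)$, $\phi^*(v)=\prod_{v'\in\phi^{-1}(v)}v'$ (identity if empty); fixing a total order on $V(\Lambda)$,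 for a word $w$, $\phi^*(w)$ denotes the word obtained by substituting for each letter $v^{\pm1}$ the product over $\phi^{-1}(v)$ in increasing order, resp. its formal inverse. A word is reduced if of minimal length for the element it represents; ${\operatorname{supp}}(w)$ is the set of vertices occurring in $w$ (with either exponent). In a word $u$ in $G(\Lambda)$, a subword $x^{\pm1}u_1x^{\mp1}$ is an innermost cancellation of $x$ if ${\operatorname{supp}}(u_1)\cap{\operatorname{Lk}}_\Lambda(x)=\emptyset$ and $u_1$ contains no letter $x^{\pm1}$. $\phi$ is $F$-surviving if for every $v'\in F$ and every reduced word $w$ in $G(\Gamma)$, $\phi^*(w)$ has no innermost cancellation of $v'$. *)

From HB Require Import structures.
From mathcomp Require Import all_boot.
From Stdlib Require Relation_Operators.
Set Implicit Arguments. Unset Strict Implicit. Unset Printing Implicit Defensive.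

Definition simple_graph (T : Type) (e : rel T) := symmetric e /\ irreflexive e.

Definition graph_map (T V : Type) (eT : rel T) (eV : rel V) (f : T -> V) :=
  forall x y, eT x y -> eV (f x) (f y).

(* covering: surjective graph map, bijective from Lk(x) onto Lk(p x) *)
Definition covering (T V : Type) (e : rel T) (eG : rel V) (p : T -> V) :=
  [/\ (forall v, exists x, p x = v), graph_map e eG p,
      (forall x y z, e x y -> e x z -> p y = p z -> y = z) &
      (forall x u, eG (p x) u -> exists y, e x y /\ p y = u)].

Definition deck (T V : Type) (e : rel T) (p : T -> V) (s : T -> T) :=
  [/\ bijective s, (forall x y, e (s x) (s y) = e x y) & (forall x, p (s x) = p x)].

Definition regular_cover (T V : Type) (e : rel T) (eG : rel V) (p : T -> V) :=
  covering e eG p /\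
  (forall x y, p x = p y -> exists s, deck e p s /\ s x = y).

(* Words: a letter (x, true) is x, (x, false) is x^-1. *)
Definition word (T : Type) := seq (T * bool).

(* Elementary moves for G(Gamma) on vertex set inV with adjacency e:
   free cancellation, and commutation of NON-adjacent generators. *)
Inductive raag_step (T : eqType) (inV : pred T) (e : rel T) : word T -> word T -> Prop :=
| rs_cancel : forall (u w : word T) x b, inV x ->
    raag_step inV e (u ++ (x, b) :: (x, ~~ b) :: w) (u ++ w)
| rs_comm : forall (u w : word T) x y a b, inV x -> inV y -> ~~ e x y ->
    raag_step inV e (u ++ (x, a) :: (y, b) :: w) (u ++ (y, b) :: (x, a) :: w).

Definition raag_eq (T : eqType) (inV : pred T) (e : rel T) : word T -> word T -> Prop :=
  Relation_Operators.clos_refl_sym_trans _ (raag_step inV e).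

Definition word_on (T : Type) (inV : pred T) (w : word T) := all (fun l => inV l.1) w.

Definition reduced (T : eqType) (inV : pred T) (e : rel T) (w : word T) :=
  word_on inV w /\
  forall w', word_on inV w' -> raag_eq inV e w w' -> size w <= size w'.

(* phi^* on letters/words; the subgraph Lambda is given by the duplicate-free
   list ord of its vertices, whose order is the fixed total order *)
Definition pull_letter (T V : eqType) (p : T -> V) (ord : seq T) (l : V * bool) : word T :=
  let xs := [seq x <- ord | p x == l.1] in
  if l.2 then [seq (x, true) | x <- xs] else rev [seq (x, false) | x <- xs].

Definition pull (T V : eqType) (p : T -> V) (ord : seq T) (w : word V) : word T :=
  flatten (map (pull_letter p ord) w).

Definition pull_injective (T : eqType) (V : finType) (e : rel T) (eG : rel V)
    (p : T -> V) (ord : seq T) :=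
  forall w1 w2 : word V,
    raag_eq (mem ord) e (pull p ord w1) (pull p ord w2) -> raag_eq predT eG w1 w2.

(* innermost cancellation of x in u (Lk_Lambda(x) = neighbours of x; all letters
   of u are vertices of Lambda) *)
Definition innermost_cancel (T : eqType) (e : rel T) (x : T) (u : word T) :=
  exists (u0 u1 u2 : word T) (b : bool),
    u = u0 ++ (x, b) :: u1 ++ (x, ~~ b) :: u2 /\
    all (fun l => ~~ e x l.1) u1 /\ all (fun l => l.1 != x) u1.

Definition F_surviving (T : eqType) (V : finType) (e : rel T) (eG : rel V)
    (p : T -> V) (ord : seq T) (F : seq T) :=
  forall v', v' \in F -> forall w : word V, reduced predT eG w ->
    ~ innermost_cancel e v' (pull p ord w).

(* If x and x^-1 cancel innermost in phi_1^*(w), the two letters come from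
   letters (p x)^{+-1} of w enclosing a subword wm whose lifts to Lambda_1 are
   all non-adjacent to x.  Moving each lift z of p x in Lambda to x by a deck
   transformation tau (which then translates Lambda into Lambda_1) shows that z
   is non-adjacent to every lift of wm in Lambda, so phi^*(p x) commutes with
   phi^*(wm) in G(Lambda) and the pair cancels there.  Injectivity of phi^*
   transports this cancellation back to G(Gamma), contradicting the
   reducedness of w. *)

From HB Require Import structures.
From mathcomp Require Import all_boot.
From Stdlib Require Import Relation_Operators.
From mathcomp Require Import zify.

Set Implicit Arguments. Unset Strict Implicit. Unset Printing Implicit Defensive.

Lemma eq_cat_cat_cons (A : Type) (s t u v : seq A) (d : A) :
  s ++ t = u ++ d :: v ->
  (exists v', s = u ++ d :: v' /\ v = v' ++ t) \/
  (exists u', u = s ++ u' /\ t = u' ++ d :: v).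
Proof.
elim: s u => [|x s IH] u /=; first by move=> ->; right; exists u.
case: u => [|y u] /=; first by case=> -> <-; left; exists s.
by case=> -> /IH [[v' [-> ->]]|[u' [-> ->]]]; [left; exists v' | right; exists u'].
Qed.

Lemma flatten_map_eq_cat_cons (A B : Type) (f : A -> seq B) w u c r :
  flatten (map f w) = u ++ c :: r ->
  exists w0 a w' s0 s1, [/\ w = w0 ++ a :: w', f a = s0 ++ c :: s1,
     u = flatten (map f w0) ++ s0 & r = s1 ++ flatten (map f w')].
Proof.
elim: w u => [|a w IH] u /=; first by case: u.
case/(@eq_cat_cat_cons B (f a)) => [[s1 [Ha ->]]|[u' [-> /IH]]].
  by exists [::], a, w, u, s1.
move=> [w0 [a1 [w' [s0 [s1 [-> Ha1 -> ->]]]]]].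
by exists (a :: w0), a1, w', s0, s1; rewrite /= catA.
Qed.

Section RaagCongruence.
Variables (T : eqType) (inV : pred T) (e : rel T).
Local Notation R := (raag_eq inV e).

Lemma raag_step_ctx a s t c :
  raag_step inV e s t -> raag_step inV e (a ++ s ++ c) (a ++ t ++ c).
Proof.
by case=> [u w y b Hy | u w y z a' b Hy Hz Hyz]; rewrite -!catA /= !(catA a u);
  [apply: rs_cancel | apply: rs_comm].
Qed.

Lemma raag_eq_ctx a s t c : R s t -> R (a ++ s ++ c) (a ++ t ++ c).
Proof.
elim=> [x y /(raag_step_ctx a c)|x|x y _|x y z _ IH1 _ IH2].
- exact: rst_step.
- exact: rst_refl.
- exact: rst_sym.
- exact: rst_trans IH2.
Qed.

Lemma raag_eq_cat s t s' t' : R s t -> R s' t' -> R (s ++ s') (t ++ t').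
Proof.
move=> /(raag_eq_ctx [::] s') H1 /(raag_eq_ctx t [::]); rewrite !cats0 => H2.
exact: rst_trans H1 H2.
Qed.

Lemma raag_eq_catC s t :
  (forall l l', l \in s -> l' \in t -> [/\ inV l.1, inV l'.1 & ~~ e l.1 l'.1]) ->
  R (s ++ t) (t ++ s).
Proof.
elim: s t => [|[x a] s IHs] t Hst /=; first by rewrite cats0; apply: rst_refl.
have Hs l l' : l \in s -> l' \in t -> [/\ inV l.1, inV l'.1 & ~~ e l.1 l'.1].
  by move=> Hl; apply: Hst; rewrite inE Hl orbT.
apply: (@rst_trans _ _ _ ((x, a) :: t ++ s)).
  exact: (raag_eq_cat (rst_refl _ _ [:: (x, a)]) (IHs t Hs)).
rewrite -[(x, a) :: t ++ s]cat1s catA -[t ++ _ :: s]cat_rcons -cats1.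
apply: raag_eq_cat (rst_refl _ _ s).
elim: t {Hs} Hst => [|[y b] t IHt] Hxt /=; first exact: rst_refl.
have [Hx Hy Hxy] := Hxt (x, a) (y, b) (mem_head _ _) (mem_head _ _).
apply: (@rst_trans _ _ _ ((y, b) :: (x, a) :: t)).
  by apply: rst_step; exact: (rs_comm [::] t a b Hx Hy Hxy).
apply: (raag_eq_cat (rst_refl _ _ [:: (y, b)])); apply: IHt => l l' Hl Hl'.
by apply: Hxt; rewrite // inE Hl' orbT.
Qed.

Definition inv_word (s : word T) : word T := rev [seq (l.1, ~~ l.2) | l <- s].

Lemma raag_eq_cat_inv s : word_on inV s -> R (s ++ inv_word s) [::].
Proof.
elim: s => [|[x b] s IH] /=; first by move=> _; apply: rst_refl.
case/andP=> Hx /IH Hs; rewrite /inv_word /= rev_cons -cats1 -/(inv_word s).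
rewrite -cat1s (catA s).
apply: (@rst_trans _ _ _ ([:: (x, b)] ++ [::] ++ [:: (x, ~~ b)])).
  exact: raag_eq_ctx.
by apply: rst_step; exact: (rs_cancel e [::] [::] b Hx).
Qed.

End RaagCongruence.

Section Pullback.
Variables (T V : eqType) (p : T -> V).

Lemma mem_pull_letter ord y s l :
  ((y, s) \in pull_letter p ord l) = [&& s == l.2, y \in ord & p y == l.1].
Proof.
case: l => v [] /=; rewrite /pull_letter /= ?mem_rev;
  apply/mapP/and3P => [[z Hz [-> ->]]|[/eqP -> Hy Hp]];
  try (by move: Hz; rewrite mem_filter => /andP [-> ->]);
  by exists y => //; rewrite mem_filter Hp Hy.
Qed.

Lemma mem_pull ord y s w : ((y, s) \in pull p ord w) = (y \in ord) && ((p y, s) \in w).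
Proof.
apply/flattenP/andP => [[_ /mapP [[v b] Hvb ->]]|[Hy Hw]].
  by rewrite mem_pull_letter /= => /and3P [/eqP -> Hy /eqP Hv]; rewrite Hv.
by exists (pull_letter p ord (p y, s)); [apply: map_f | rewrite mem_pull_letter Hy !eqxx].
Qed.

Lemma pull_cat ord s t : pull p ord (s ++ t) = pull p ord s ++ pull p ord t.
Proof. by rewrite /pull map_cat flatten_cat. Qed.

Lemma pull_cons ord l s : pull p ord (l :: s) = pull_letter p ord l ++ pull p ord s.
Proof. by []. Qed.

Lemma pull_letterN ord v b :
  pull_letter p ord (v, ~~ b) = inv_word (pull_letter p ord (v, b)).
Proof. by case: b; rewrite /pull_letter /inv_word /= ?map_rev ?revK -map_comp. Qed.

Lemma innermost_cancel_pull (e : rel T) ord x w :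
  innermost_cancel e x (pull p ord w) ->
  exists w0 wm w2 b, w = w0 ++ (p x, b) :: wm ++ (p x, ~~ b) :: w2 /\
    {in pull p ord wm, forall l, ~~ e x l.1}.
Proof.
case=> u0 [u1 [u2 [b [Hu [Hu1 _]]]]].
have [w0 [[v c] [w' [s0 [s1 [-> Hvc _ Hr]]]]]] := flatten_map_eq_cat_cons Hu.
have : (x, b) \in pull_letter p ord (v, c) by rewrite Hvc mem_cat mem_head orbT.
rewrite mem_pull_letter /= => /and3P [/eqP Ec _ /eqP Ev].
case: (eq_cat_cat_cons (esym Hr)) => [[s2 [Hs1 _]] | [u1' [Hu1' Ht]]].
  (* all letters of phi^*(v^c) have the same sign c *)
  have : (x, ~~ b) \in pull_letter p ord (v, c).
    by rewrite Hvc Hs1 !(mem_cat, inE) eqxx !orbT.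
  by rewrite mem_pull_letter Ec; case: (c).
have [wm [[v' c'] [w2 [s0' [s1' [-> Hvc' Hu1'' _]]]]]] := flatten_map_eq_cat_cons Ht.
have : (x, ~~ b) \in pull_letter p ord (v', c') by rewrite Hvc' mem_cat mem_head orbT.
rewrite mem_pull_letter /= => /and3P [/eqP Ec' _ /eqP Ev'].
exists w0, wm, w2, b; rewrite /= -Ev -Ec -Ev' -Ec'; split=> // l Hl.
by apply: (allP Hu1); rewrite Hu1' Hu1'' !mem_cat Hl !orbT.
Qed.

Lemma raag_eq_pull_cancel (e : rel T) ord v b w0 wm w2 :
  {in ord, forall z, p z = v -> {in pull p ord wm, forall l, ~~ e z l.1}} ->
  raag_eq (mem ord) e (pull p ord (w0 ++ (v, b) :: wm ++ (v, ~~ b) :: w2))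
                      (pull p ord (w0 ++ wm ++ w2)).
Proof.
move=> Hv; rewrite !(pull_cat, pull_cons) pull_letterN.
set A := pull_letter p ord (v, b); set M := pull p ord wm.
have HA : word_on (mem ord) A.
  by apply/allP => -[z s]; rewrite mem_pull_letter => /and3P [].
apply: raag_eq_cat (rst_refl _ _ _) _.
rewrite !catA; apply: raag_eq_cat (rst_refl _ _ _).
apply: (@rst_trans _ _ _ ((M ++ A) ++ inv_word A)).
  apply: raag_eq_cat (rst_refl _ _ _); apply: raag_eq_catC => -[z s] [y s'].
  rewrite mem_pull_letter mem_pull => /and3P [_ Hz /eqP Hpz] /andP [Hy Hl].
  by split=> //=; apply: (Hv z Hz Hpz (y, s')); rewrite mem_pull Hy.
rewrite -catA -[X in clos_refl_sym_trans _ _ _ X]cats0.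
exact: raag_eq_cat (rst_refl _ _ _) (raag_eq_cat_inv e HA).
Qed.

End Pullback.

Lemma deck_nonadj_pull (T V : eqType) (e : rel T) (p : T -> V) (L F L1 : seq T) x wm :
  (forall y z, p y = p z -> exists s, deck e p s /\ s y = z) ->
  (forall y, (exists s, [/\ deck e p s, (exists2 z, z \in L & s z \in F)
                 & (exists2 z, z \in L & y = s z)]) -> y \in L1) ->
  x \in F -> {in pull p L1 wm, forall l, ~~ e x l.1} ->
  {in L, forall z, p z = p x -> {in pull p L wm, forall l, ~~ e z l.1}}.
Proof.
move=> Htrans HL1 xF Hx z zL /Htrans [tau [Hdeck tau_z]] [y s].
have [_ tau_e tau_p] := Hdeck.
rewrite mem_pull => /andP [yL Hw].
have tyL1 : tau y \in L1.
  by apply: HL1; exists tau; split=> //; [exists z; rewrite ?tau_z | exists y].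
by rewrite /= -tau_e tau_z; apply: (Hx (tau y, s)); rewrite mem_pull tyL1 tau_p.
Qed.

Theorem lemma2p4 (T : eqType) (V : finType) (e : rel T) (eG : rel V) (p : T -> V)
    (L F L1 : seq T) :
  simple_graph e -> simple_graph eG -> regular_cover e eG p ->
  uniq L -> (forall v : V, exists2 x, x \in L & p x = v) ->
  F != [::] ->
  uniq L1 ->
  (forall y, y \in L1 <->
     exists s, [/\ deck e p s, (exists2 x, x \in L & s x \in F)
                 & (exists2 x, x \in L & y = s x)]) ->
  pull_injective e eG p L ->
  F_surviving e eG p L1 F.
Proof.
move=> _ _ [_ Htrans] _ _ _ _ HL1 Hinj x xF w [_ Hred].
case/innermost_cancel_pull => w0 [wm [w2 [b [Ew Hx]]]].
have HL := deck_nonadj_pull Htrans (fun y => proj2 (HL1 y)) xF Hx.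
have /Hinj Hw : raag_eq (mem L) e (pull p L w) (pull p L (w0 ++ wm ++ w2)).
  by rewrite Ew; apply: raag_eq_pull_cancel HL.
have := Hred _ (introT allP (fun _ _ => erefl)) Hw.
by rewrite Ew !size_cat /= size_cat /=; lia.
Qed.
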